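(* Let $R$ be a ring, $S\in\mathrm{maxDen}_l(R)$, $A=S^{-1}R$ with group of units $A^*$, $\mathfrak a:=\mathrm{ass}(S)$, $\pi_{\mathfrak a}:R\to R/\mathfrak a$, $a\mapsto a+\mathfrak a$, and $\sigma_{\mathfrak a}:R\to A$, $r\mapsto r/1$ (so $R/\mathfrak a$ is identified with $\sigma_{\mathfrak a}(R)\subseteq A$). Then: (1) $S=S_{\mathfrak a}(R)$, $S=\pi_{\mathfrak a}^{-1}(S_0(R/\mathfrak a))$, $\pi_{\mathfrak a}(S)=S_0(R/\mathfrak a)$ and $A\cong S_0(R/\mathfrak a)^{-1}(R/\mathfrak a)=Q_l(R/\mathfrak a)$; (2) $S_0(A)=A^*$ and $S_0(A)\cap (R/\mathfrak a)=S_0(R/\mathfrak a)$; (3) $S=\sigma_{\mathfrak a}^{-1}(A^* )$; (4) $A^*$ is the group generated by $\sigma_{\mathfrak a}(S)$ and $\{\sigma_{\mathfrak a}(s)^{-1}\mid s\in S\}$; (5) $A^*=\{\sigma_{\mathfrak a}(s)^{-1}\sigma_{\mathfrak a}(t)\mid s,t\in S\}$; (6) $Q_l(A)=A$ and $\mathrm{Ass}_l(A)=\{0\}$; in particular, every $T\in\mathrm{Den}_l(A,0)$ satisfies $T\subseteq A^*$.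
   Context: Rings are associative with $1$. A multiplicatively closed subset $S$ ($1\in S$, $0\notin S$) is a left Ore set if $Sr\cap Rs\ne\emptyset$ for all $r\in R,s\in S$; $\mathrm{ass}(S):=\{r\mid sr=0\text{ for some }s\in S\}$; it is a left denominator set if moreover $rs=0$ ($s\in S$) implies $tr=0$ for some $t\in S$. $\mathrm{Den}_l(R)$ is the set of left denominator sets, $\mathrm{maxDen}_l(R)$ the set of its maximal elements under inclusion, $\mathrm{Ass}_l(R)=\{\mathrm{ass}(S)\mid S\in\mathrm{Den}_l(R)\}$, $\mathrm{Den}_l(R,\mathfrak b)=\{S\in\mathrm{Den}_l(R)\mid\mathrm{ass}(S)=\mathfrak b\}$, and $S_{\mathfrak b}(R)$ is the largest element of $\mathrm{Den}_l(R,\mathfrak b)$ (it exists). For a ring $B$, $S_0(B):=S_{0}(B)$ is the largest element of $\mathrm{Den}_l(B,0)$ and $Q_l(B):=S_0(B)^{-1}B$. *)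

From HB Require Import structures.
From mathcomp Require Import all_boot all_order all_algebra.
Set Implicit Arguments. Unset Strict Implicit. Unset Printing Implicit Defensive.
Import GRing.Theory.
Local Open Scope ring_scope.

Section Den.
Variable R : nzRingType.

Definition mult_closed (S : R -> Prop) : Prop :=
  S 1 /\ ~ S 0 /\ (forall a b, S a -> S b -> S (a * b)).

Definition left_Ore (S : R -> Prop) : Prop :=
  forall r s, S s -> exists s' r', S s' /\ s' * r = r' * s.

Definition ass (S : R -> Prop) (r : R) : Prop := exists s, S s /\ s * r = 0.

Definition left_den (S : R -> Prop) : Prop :=
  [/\ mult_closed S, left_Ore S &
      forall r s, S s -> r * s = 0 -> exists t, S t /\ t * r = 0].

Definition Den_l (b : R -> Prop) (S : R -> Prop) : Prop :=
  left_den S /\ forall r, ass S r <-> b r.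

Definition maxDen_l (S : R -> Prop) : Prop :=
  left_den S /\
  forall T, left_den T -> (forall x, S x -> T x) -> forall x, T x -> S x.

Definition Ass_l (I : R -> Prop) : Prop :=
  exists S, left_den S /\ forall r, I r <-> ass S r.

(* S_b(R): the largest element of Den_l(R, b) (which exists, by the
   paper's standing result); realized as the union of all elements of
   Den_l(R, b), which coincides with the largest element. *)
Definition S_ (b : R -> Prop) (x : R) : Prop :=
  exists T, Den_l b T /\ T x.

Definition zero_ideal (r : R) : Prop := r = 0.

Definition S0 : R -> Prop := S_ zero_ideal.

End Den.

(* f : R -> A is a left localization (left ring of fractions) of R at S,
   i.e. A = S^{-1}R up to isomorphism, f(r) = r/1 *)
Definition is_left_loc (R : nzRingType) (A : unitRingType)
    (S : R -> Prop) (f : {rmorphism R -> A}) : Prop :=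
  [/\ forall s, S s -> f s \is a GRing.unit,
      forall a : A, exists s r, S s /\ a = (f s)^-1 * f r &
      forall r, f r = 0 <-> ass S r].

Inductive gen_group (A : unitRingType) (X : A -> Prop) : A -> Prop :=
  | gen_mem x : X x -> gen_group X x
  | gen_one : gen_group X 1
  | gen_mul x y : gen_group X x -> gen_group X y -> gen_group X (x * y)
  | gen_inv x : gen_group X x -> gen_group X x^-1.

(* A maximal left denominator set S absorbs every set T for which the
   multiplicative monoid generated by S and T is again a left denominator set;
   0 is kept out of that monoid by a multiplicative invariant vanishing nowhere
   on S and T.  Applied to the preimage in R of the units of A = S^-1 R, to the
   preimage of a left denominator set of R / ass S with trivial ass, and to the
   numerators of the fractions in a left denominator set of A, this gives
   S = sigma^-1(units of A), S = pi^-1(S_0(R / ass S)), and that every left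
   denominator set of A consists of units. *)
From HB Require Import structures.
From mathcomp Require Import all_boot all_order all_algebra.
Set Implicit Arguments. Unset Strict Implicit. Unset Printing Implicit Defensive.
Import GRing.Theory.
Local Open Scope ring_scope.

Section LeftDenominatorSets.
Variables (R : nzRingType) (S : R -> Prop).
Hypothesis LS : left_den S.

Lemma left_den1 : S 1.
Proof. by case: LS => [[]]. Qed.

Lemma left_den_neq0 : ~ S 0.
Proof. by case: LS => [[_ []]]. Qed.

Lemma left_denM a b : S a -> S b -> S (a * b).
Proof. by case: LS => [[_ [_ H]] _ _]; apply: H. Qed.

Lemma left_den_Ore r s : S s -> exists s' r', S s' /\ s' * r = r' * s.
Proof. by case: LS => _ H _; apply: H. Qed.

Lemma left_den_ann r s : S s -> r * s = 0 -> exists t, S t /\ t * r = 0.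
Proof. by case: LS => _ _ H; apply: H. Qed.

Lemma ass0 : ass S 0.
Proof. by exists 1; rewrite mulr0; split=> //; apply: left_den1. Qed.

Lemma assD a b : ass S a -> ass S b -> ass S (a + b).
Proof.
move=> [t1 [H1 E1]] [t2 [H2 E2]].
have [s' [r' [Hs' E]]] := left_den_Ore t1 H2.
exists (s' * t1); split; first exact: left_denM.
by rewrite mulrDr -mulrA E1 mulr0 add0r E -mulrA E2 mulr0.
Qed.

Lemma assMl c a : ass S a -> ass S (c * a).
Proof.
move=> [t [Ht E]]; have [s' [r' [Hs' E']]] := left_den_Ore c Ht.
by exists s'; split=> //; rewrite mulrA E' -mulrA E mulr0.
Qed.

Lemma assMr c a : ass S a -> ass S (a * c).
Proof. by move=> [t [Ht E]]; exists t; split=> //; rewrite mulrA E mul0r. Qed.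

(* Two multiplicatively closed predicates avoiding 0, serving as the
   invariant Q of left_den_mul_closure. *)
Definition regular_mod_ass (x : R) : Prop :=
  forall y, ass S (x * y) -> ass S y.

Lemma regular_mod_assM a b :
  regular_mod_ass a -> regular_mod_ass b -> regular_mod_ass (a * b).
Proof. by move=> Ha Hb y; rewrite -mulrA => /Ha /Hb. Qed.

Lemma regular_mod_ass_neq0 : ~ regular_mod_ass 0.
Proof.
move=> H; have [s [Hs E]] : ass S 1 by apply: H; rewrite mul0r; apply: ass0.
by apply: left_den_neq0; rewrite -E mulr1.
Qed.

Lemma regular_mod_ass_den s : S s -> regular_mod_ass s.
Proof.
move=> Hs y [s' [Hs' E]].
by exists (s' * s); split; [exact: left_denM | rewrite -mulrA].
Qed.

Definition linv_mod_ass (x : R) : Prop :=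
  exists y t, S t /\ ass S (y * x - t).

Lemma linv_mod_assM a b :
  linv_mod_ass a -> linv_mod_ass b -> linv_mod_ass (a * b).
Proof.
move=> [y1 [t1 [H1 E1]]] [y2 [t2 [H2 E2]]].
have [t3 [c [H3 E3]]] := left_den_Ore y2 H1.
exists (c * y1), (t3 * t2); split; first exact: left_denM.
have -> : c * y1 * (a * b) - t3 * t2 =
          c * ((y1 * a - t1) * b) + t3 * (y2 * b - t2).
  by rewrite mulrBl !mulrBr !mulrA -E3 addrA subrK.
by apply: assD; [apply/assMl/assMr | apply: assMl].
Qed.

Lemma linv_mod_ass_neq0 : ~ linv_mod_ass 0.
Proof.
move=> [y [t [Ht [t' [Ht' E]]]]].
apply: left_den_neq0; suff <- : t' * t = 0 by apply: left_denM.
by apply/eqP; rewrite -oppr_eq0 -mulrN -E mulr0 add0r.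
Qed.

Lemma linv_mod_ass_den t : S t -> linv_mod_ass t.
Proof. by move=> Ht; exists 1, t; rewrite mul1r subrr; split=> //; apply: ass0. Qed.

Lemma linv_mod_ass_linv x y : y * x = 1 -> linv_mod_ass x.
Proof.
by move=> E; exists y, 1; rewrite E subrr; split; [apply: left_den1 | apply: ass0].
Qed.

End LeftDenominatorSets.

Section MulClosure.
Variable R : nzRingType.

Inductive mul_closure (S T : R -> Prop) : R -> Prop :=
  | mul_closure_l s : S s -> mul_closure S T s
  | mul_closure_r t : T t -> mul_closure S T t
  | mul_closureM x y :
      mul_closure S T x -> mul_closure S T y -> mul_closure S T (x * y).

Lemma left_den_mul_closure (S T Q : R -> Prop) :
  left_den S ->
  (forall r t, T t -> exists s t' r', [/\ S s, T t' & s * t' * r = r' * t]) ->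
  (forall r t, T t -> r * t = 0 -> exists s t', [/\ S s, T t' & s * t' * r = 0]) ->
  ~ Q 0 -> (forall a b, Q a -> Q b -> Q (a * b)) ->
  (forall s, S s -> Q s) -> (forall t, T t -> Q t) ->
  left_den (mul_closure S T).
Proof.
move=> LS OreT annT nQ0 QM QS QT.
have QG x : mul_closure S T x -> Q x.
  by elim=> [s /QS | t /QT | x1 y1 _ Hx _ Hy] //; apply: QM.
split.
- split; first by apply: mul_closure_l; apply: left_den1.
  by split; [move/QG | apply: mul_closureM].
- move=> r m Hm; elim: Hm r => [s Hs | t Ht | x y _ IHx _ IHy] r.
  + have [s' [r' [Hs' E]]] := left_den_Ore LS r Hs.
    by exists s', r'; split=> //; apply: mul_closure_l.
  + have [s [t' [r' [Hs Ht' E]]]] := OreT r t Ht.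
    exists (s * t'), r'; split=> //.
    by apply: mul_closureM; [apply: mul_closure_l | apply: mul_closure_r].
  + have [m1 [r1 [Hm1 E1]]] := IHy r.
    have [m2 [r2 [Hm2 E2]]] := IHx r1.
    exists (m2 * m1), r2; split; first exact: mul_closureM.
    by rewrite -mulrA E1 mulrA E2 mulrA.
- move=> r m Hm; elim: Hm r => [s Hs | t Ht | x y _ IHx _ IHy] r E.
  + have [t [Ht E']] := left_den_ann LS Hs E.
    by exists t; split=> //; apply: mul_closure_l.
  + have [s [t' [Hs Ht' E']]] := annT r t Ht E.
    exists (s * t'); split=> //.
    by apply: mul_closureM; [apply: mul_closure_l | apply: mul_closure_r].
  + have [m1 [Hm1 E1]] := IHy (r * x) ltac:(by rewrite -mulrA).
    have [m2 [Hm2 E2]] := IHx (m1 * r) ltac:(by rewrite -mulrA).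
    by exists (m2 * m1); split; [exact: mul_closureM | rewrite -mulrA].
Qed.

Lemma maxDen_mul_closure (S T : R -> Prop) :
  maxDen_l S -> left_den (mul_closure S T) -> forall t, T t -> S t.
Proof.
move=> [_ Smax] LST t Ht.
by apply: (Smax _ LST); [move=> x; apply: mul_closure_l | apply: mul_closure_r].
Qed.

Lemma maxDen_S_ass (S : R -> Prop) :
  maxDen_l S -> forall x, S x <-> S_ (ass S) x.
Proof.
move=> HS x; split; first by move=> Hx; exists S; split=> //; split=> //; case: HS.
move=> [T [[LT HT] Hx]].
apply: (maxDen_mul_closure HS _ Hx).
apply: (@left_den_mul_closure S T (regular_mod_ass S)) => //.
- by case: HS.
- move=> r t Ht; have [t' [r' [Ht' E]]] := left_den_Ore LT r Ht.
  by exists 1, t', r'; rewrite mul1r; split=> //; apply: left_den1; exact: HS.1.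
- move=> r t Ht E; have [t' [Ht' E']] := left_den_ann LT Ht E.
  by exists 1, t'; rewrite mul1r; split=> //; apply: left_den1; exact: HS.1.
- exact: (regular_mod_ass_neq0 HS.1).
- exact: regular_mod_assM.
- exact: (regular_mod_ass_den HS.1).
- move=> t Ht y /HT [t' [Ht' E]].
  by apply/HT; exists (t' * t); split; [exact: left_denM | rewrite -mulrA].
Qed.

End MulClosure.

Lemma ker_ass_eq (R B : nzRingType) (S : R -> Prop) (f : {rmorphism R -> B}) :
  (forall r, f r = 0 <-> ass S r) ->
  forall a b, f a = f b -> exists s, S s /\ s * a = s * b.
Proof.
move=> ker a b E; have [s [Hs E']] : ass S (a - b) by apply/ker; rewrite rmorphB E subrr.
by exists s; split=> //; apply/eqP; rewrite -subr_eq0 -mulrBr E'.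
Qed.

Section SurjectiveFactor.
Variables (R B : nzRingType) (A : unitRingType) (sigma : {rmorphism R -> A})
  (pi : {rmorphism R -> B}).
Hypothesis pi_surj : forall y : B, exists x, pi x = y.
Hypothesis ker_pi_sigma : forall x, pi x = 0 -> sigma x = 0.

Let pi_surjb (y : B) : exists x, pi x == y.
Proof. by have [x Hx] := pi_surj y; exists x; apply/eqP. Qed.

Definition surj_factor_fun (y : B) : A := sigma (xchoose (pi_surjb y)).

Lemma surj_factor_funE x : surj_factor_fun (pi x) = sigma x.
Proof.
have /eqP Hz := xchooseP (pi_surjb (pi x)).
apply/eqP; rewrite -subr_eq0 -rmorphB; apply/eqP/ker_pi_sigma.
by rewrite rmorphB Hz subrr.
Qed.

Lemma surj_factor_zmod : zmod_morphism surj_factor_fun.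
Proof.
move=> a b; have [x <-] := pi_surj a; have [y <-] := pi_surj b.
by rewrite -rmorphB !surj_factor_funE rmorphB.
Qed.

Lemma surj_factor_monoid : monoid_morphism surj_factor_fun.
Proof.
split; first by rewrite -(rmorph1 pi) surj_factor_funE rmorph1.
move=> a b; have [x <-] := pi_surj a; have [y <-] := pi_surj b.
by rewrite -rmorphM !surj_factor_funE rmorphM.
Qed.

HB.instance Definition _ :=
  GRing.isZmodMorphism.Build B A surj_factor_fun surj_factor_zmod.
HB.instance Definition _ :=
  GRing.isMonoidMorphism.Build B A surj_factor_fun surj_factor_monoid.

Definition surj_factor : {rmorphism B -> A} := surj_factor_fun.

Lemma surj_factorE x : surj_factor (pi x) = sigma x.
Proof. exact: surj_factor_funE. Qed.

End SurjectiveFactor.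

Section Quotient.
Variables (R B : nzRingType) (S : R -> Prop) (pi : {rmorphism R -> B}).
Hypothesis HS : maxDen_l S.
Hypothesis pi_surj : forall y : B, exists x, pi x = y.
Hypothesis ker_pi : forall x, pi x = 0 <-> ass S x.

Let LS : left_den S := HS.1.
Let piS (y : B) : Prop := exists x, S x /\ pi x = y.

Lemma image_Den_l0 : Den_l (@zero_ideal B) piS.
Proof.
split; first split.
- split; first by exists 1; rewrite rmorph1; split=> //; apply: left_den1.
  split.
    move=> [x [Hx /ker_pi [s [Hs E]]]].
    by apply: (left_den_neq0 LS); rewrite -E; apply: left_denM.
  move=> _ _ [x [Hx <-]] [y [Hy <-]].
  by exists (x * y); split; [exact: left_denM | exact: rmorphM].
- move=> r _ [x [Hx <-]]; have [r0 <-] := pi_surj r.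
  have [s' [r' [Hs' E]]] := left_den_Ore LS r0 Hx.
  by exists (pi s'), (pi r'); split; [exists s' | rewrite -!rmorphM E].
- move=> r _ [x [Hx <-]] E; have [r0 Er] := pi_surj r; subst r.
  have /ker_pi [s1 [Hs1 E1]] : pi (r0 * x) = 0 by rewrite rmorphM.
  have [t [Ht E2]] := left_den_ann LS (r := s1 * r0) Hx ltac:(by rewrite -mulrA).
  exists (pi (t * s1)); rewrite -rmorphM -mulrA E2 rmorph0.
  by split=> //; exists (t * s1); split=> //; apply: left_denM.
- move=> y; rewrite /zero_ideal; split.
    move=> [_ [[x [Hx <-]] E]]; have [y0 Ey] := pi_surj y; subst y.
    have /ker_pi [s [Hs E1]] : pi (x * y0) = 0 by rewrite rmorphM.
    by apply/ker_pi; exists (s * x); split; [exact: left_denM | rewrite -mulrA].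
  move=> ->; exists 1; rewrite mulr0; split=> //.
  by exists 1; rewrite rmorph1; split=> //; apply: left_den1.
Qed.

Lemma maxDen_S0_quotient x : S x <-> S0 (pi x).
Proof.
split; first by move=> Hx; exists piS; split; [exact: image_Den_l0 | exists x].
move=> [T [[LT HT] Hx]].
apply: (maxDen_mul_closure HS (T := fun u => T (pi u)) _ Hx).
apply: (@left_den_mul_closure _ S _ (regular_mod_ass S)) => //.
- move=> r u Hu; have [t' [b [Ht' E]]] := left_den_Ore LT (pi r) Hu.
  have [w Ew] := pi_surj t'; have [v Ev] := pi_surj b; subst t' b.
  have [s [Hs E2]] : exists s, S s /\ s * (w * r) = s * (v * u).
    by apply: (ker_ass_eq ker_pi); rewrite !rmorphM.
  by exists s, w, (s * v); split=> //; rewrite -mulrA E2 mulrA.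
- move=> r u Hu E.
  have [t [Ht E2]] : exists t, T t /\ t * pi r = 0.
    by apply: (left_den_ann LT Hu); rewrite -rmorphM E rmorph0.
  have [w Ew] := pi_surj t; subst t.
  have /ker_pi [s [Hs E3]] : pi (w * r) = 0 by rewrite rmorphM.
  by exists s, w; split=> //; rewrite -mulrA.
- exact: regular_mod_ass_neq0.
- exact: regular_mod_assM.
- exact: regular_mod_ass_den.
- move=> u Hu y /ker_pi; rewrite rmorphM => E.
  have /HT : ass T (pi y) by exists (pi u).
  by move/ker_pi.
Qed.

Lemma S0_quotient_image y : S0 y <-> exists x, S x /\ pi x = y.
Proof.
have [x <-] := pi_surj y.
by split=> [/maxDen_S0_quotient Hx | [x' [/maxDen_S0_quotient Hx' <-]]]; first exists x.
Qed.

Variables (A : unitRingType) (sigma : {rmorphism R -> A}).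
Hypothesis Hloc : is_left_loc S sigma.

Lemma ker_pi_sigma x : pi x = 0 -> sigma x = 0.
Proof. by case: Hloc => _ _ ker /ker_pi /ker. Qed.

Lemma quotient_left_loc :
  is_left_loc (@S0 B) (surj_factor pi_surj ker_pi_sigma).
Proof.
have [Su Sfrac Sker] := Hloc.
split.
- by move=> _ /S0_quotient_image [x [Hx <-]]; rewrite surj_factorE; apply: Su.
- move=> a; have [s [r [Hs ->]]] := Sfrac a.
  by exists (pi s), (pi r); rewrite !surj_factorE; split=> //; apply/maxDen_S0_quotient.
- move=> y; have [x <-] := pi_surj y; rewrite surj_factorE; split.
    move=> /Sker /ker_pi ->; exists 1; rewrite mulr0; split=> //.
    by rewrite -(rmorph1 pi); apply/maxDen_S0_quotient; exact: left_den1.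
  move=> [_ [/S0_quotient_image [s [Hs <-]] E]].
  apply/Sker/ker_pi; apply: (image_Den_l0.2 (pi x)).1.
  by exists (pi s); split=> //; exists s.
Qed.

End Quotient.

Section Localization.
Variables (R : nzRingType) (S : R -> Prop) (A : unitRingType)
  (sigma : {rmorphism R -> A}).
Hypothesis HS : maxDen_l S.
Hypothesis Hloc : is_left_loc S sigma.

Let LS : left_den S := HS.1.

Lemma loc_unit s : S s -> sigma s \is a GRing.unit.
Proof. by case: Hloc => H _ _; apply: H. Qed.

Lemma loc_frac a : exists s r, S s /\ a = (sigma s)^-1 * sigma r.
Proof. by case: Hloc => _ H _; apply: H. Qed.

Lemma loc_ker r : sigma r = 0 <-> ass S r.
Proof. by case: Hloc => _ _ H; apply: H. Qed.

Lemma loc_num a : exists s r, S s /\ sigma r = sigma s * a.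
Proof.
by have [s [r [Hs ->]]] := loc_frac a; exists s, r; rewrite mulVKr ?loc_unit.
Qed.

Lemma maxDen_unitP x : S x <-> sigma x \is a GRing.unit.
Proof.
split=> [|Hx]; first exact: loc_unit.
pose U y := sigma y \is a GRing.unit.
apply: (maxDen_mul_closure HS (T := U) _ Hx).
apply: (@left_den_mul_closure _ S U U) => //.
- move=> r t Ht.
  have [s1 [r1 [Hs1 E]]] := loc_num (sigma r * (sigma t)^-1).
  have [s2 [Hs2 E2]] : exists s2, S s2 /\ s2 * (s1 * r) = s2 * (r1 * t).
    by apply: (ker_ass_eq loc_ker); rewrite !rmorphM /= E -mulrA divrK.
  exists (s2 * s1), 1, (s2 * r1); rewrite /U rmorph1 unitr1 mulr1.
  by split=> //; [exact: left_denM | rewrite -mulrA E2 mulrA].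
- move=> r t Ht E; have /loc_ker [s [Hs E2]] : sigma r = 0.
    by rewrite -[sigma r](mulrK Ht) -rmorphM E rmorph0 mul0r.
  by exists s, 1; rewrite /U rmorph1 unitr1 mulr1.
- by rewrite /U rmorph0 unitr0.
- by move=> a b; rewrite /U rmorphM => Ha Hb; rewrite unitrMl.
- exact: loc_unit.
Qed.

Lemma unit_fracP u :
  u \is a GRing.unit <-> exists s t, [/\ S s, S t & u = (sigma s)^-1 * sigma t].
Proof.
split=> [Hu | [s [t [Hs Ht ->]]]]; last by rewrite unitrMl ?unitrV loc_unit.
have [s [r [Hs Er]]] := loc_num u.
exists s, r; rewrite Er mulKr ?loc_unit //; split=> //.
by apply/maxDen_unitP; rewrite Er unitrMr ?loc_unit.
Qed.

Lemma unit_gen_groupP u : u \is a GRing.unit <->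
  gen_group (fun v => exists s, S s /\ (v = sigma s \/ v = (sigma s)^-1)) u.
Proof.
split.
  move/unit_fracP=> [s [t [Hs Ht ->]]].
  apply: gen_mul; apply: gen_mem.
    by exists s; split=> //; right.
  by exists t; split=> //; left.
elim=> [_ [s [Hs [->|->]]] | | x y _ Hx _ Hy | x _ Hx].
- exact: loc_unit.
- by rewrite unitrV loc_unit.
- exact: unitr1.
- by rewrite unitrMl.
- by rewrite unitrV.
Qed.

Section DenominatorsOfA.
Variable T : A -> Prop.
Hypothesis LT : left_den T.

Definition numerators (r : R) : Prop :=
  exists s t, [/\ S s, T t & sigma r = sigma s * t].

Lemma numerators_Ore r u : numerators u ->
  exists s t' r', [/\ S s, numerators t' & s * t' * r = r' * u].
Proof.
move=> [s [t [Hs Ht Eu]]].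
have [t' [a' [Ht' E1]]] := left_den_Ore LT (sigma r) Ht.
have [s2 [r2 [Hs2 Er2]]] := loc_num t'.
have [s3 [r3 [Hs3 Er3]]] := loc_num (sigma s2 * a' * (sigma s)^-1).
have [s4 [Hs4 E]] : exists s4, S s4 /\ s4 * (s3 * r2 * r) = s4 * (r3 * u).
  apply: (ker_ass_eq loc_ker); rewrite !rmorphM /= Er2 Er3 Eu -!mulrA E1.
  by rewrite (mulrA (sigma s)^-1) mulVr ?loc_unit // mul1r.
exists (s4 * s3), r2, (s4 * r3); split; first exact: left_denM.
  by exists s2, t'.
by move: E; rewrite !mulrA.
Qed.

Lemma numerators_ann r u : numerators u -> r * u = 0 ->
  exists s t', [/\ S s, numerators t' & s * t' * r = 0].
Proof.
move=> [s [t [Hs Ht Eu]]] E.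
have [t' [Ht' E2]] : exists t', T t' /\ t' * (sigma r * sigma s) = 0.
  by apply: (left_den_ann LT Ht); rewrite -mulrA -Eu -rmorphM E rmorph0.
have E3 : t' * sigma r = 0.
  by rewrite -[t' * _](mulrK (loc_unit Hs)) -(mulrA t') E2 mul0r.
have [s2 [r2 [Hs2 Er2]]] := loc_num t'.
have /loc_ker [s4 [Hs4 E4]] : sigma (r2 * r) = 0 by rewrite rmorphM Er2 -mulrA E3 mulr0.
by exists s4, r2; split=> //; [exists s2, t' | rewrite -mulrA].
Qed.

Lemma numerators_sub r : numerators r -> S r.
Proof.
pose Q x := linv_mod_ass T (sigma x).
have QS s : S s -> Q s.
  by move=> Hs; apply: (linv_mod_ass_linv LT); apply: mulVr; apply: loc_unit.
apply: (maxDen_mul_closure HS).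
apply: (@left_den_mul_closure _ S _ Q) => //.
- exact: numerators_Ore.
- exact: numerators_ann.
- by rewrite /Q rmorph0; apply: linv_mod_ass_neq0.
- by move=> a b; rewrite /Q rmorphM; apply: linv_mod_assM.
- move=> r' [s [t [Hs Ht E]]]; rewrite /Q E.
  by apply: linv_mod_assM => //; [apply: QS | apply: linv_mod_ass_den].
Qed.

Lemma left_den_loc_unit t : T t -> t \is a GRing.unit.
Proof.
move=> Ht; have [s [r [Hs Er]]] := loc_num t.
have /maxDen_unitP : S r by apply: numerators_sub; exists s, t.
by rewrite Er unitrMr // loc_unit.
Qed.

End DenominatorsOfA.

End Localization.

Section UnitDenominators.
Variable A : unitRingType.

Lemma units_Den_l0 : Den_l (@zero_ideal A) (fun u : A => u \is a GRing.unit).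
Proof.
split; first split.
- by split; [exact: unitr1 | split; [rewrite unitr0 | move=> a b Ha Hb; rewrite unitrMl]].
- by move=> r s Hs; exists 1, (r / s); rewrite mul1r divrK ?unitr1.
- by move=> r s Hs E; exists 1; rewrite mul1r -(mulrK Hs r) E mul0r unitr1.
- move=> r; rewrite /zero_ideal; split=> [[u [Hu E]] | ->].
    by rewrite -(mulKr Hu r) E mulr0.
  by exists 1; rewrite mulr0 unitr1.
Qed.

Hypothesis den_units :
  forall T : A -> Prop, left_den T -> forall t, T t -> t \is a GRing.unit.

Lemma den_units_ass (T : A -> Prop) : left_den T -> forall x, ass T x <-> x = 0.
Proof.
move=> LT x; split=> [[t [Ht E]] | ->]; last exact: ass0.
by rewrite -(mulKr (den_units LT Ht) x) E mulr0.
Qed.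

Lemma S0_unitP (u : A) : S0 u <-> u \is a GRing.unit.
Proof.
split; first by move=> [T [[LT _] Hu]]; apply: den_units LT _ Hu.
by move=> Hu; exists (fun u : A => u \is a GRing.unit); split=> //; apply: units_Den_l0.
Qed.

Lemma left_loc_idfun : is_left_loc (@S0 A) (@idfun A : {rmorphism A -> A}).
Proof.
split=> [s /S0_unitP // | a | r].
- by exists 1, a; rewrite invr1 mul1r; split=> //; apply/S0_unitP; exact: unitr1.
- split=> [/= -> | [u [/S0_unitP Hu E]]]; last by rewrite /= -(mulKr Hu r) E mulr0.
  by exists 1; rewrite mulr0; split=> //; apply/S0_unitP; exact: unitr1.
Qed.

Lemma Ass_l_zero (I : A -> Prop) : Ass_l I <-> (forall x, I x <-> x = 0).
Proof.
have units_den : left_den (fun u : A => u \is a GRing.unit) := units_Den_l0.1.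
split=> [[T [LT HI]] x | HI].
  by split=> [/HI /(den_units_ass LT) | /(den_units_ass LT) /HI].
exists (fun u : A => u \is a GRing.unit); split=> // x.
by split=> [/HI /(den_units_ass units_den) | /(den_units_ass units_den) /HI].
Qed.

End UnitDenominators.

Theorem theorem3p9
  (R : nzRingType) (S : R -> Prop) (HS : maxDen_l S)
  (A : unitRingType) (sigma : {rmorphism R -> A})
  (Hloc : is_left_loc S sigma)
  (B : nzRingType) (pi : {rmorphism R -> B})
  (Hpi_surj : forall y : B, exists x, pi x = y)
  (Hpi_ker : forall x, pi x = 0 <-> ass S x) :
  (* (1) *)
  [/\ (forall x, S x <-> S_ (ass S) x),
      (forall x, S x <-> S0 (pi x)),
      (forall y, S0 y <-> exists x, S x /\ pi x = y) &
      exists f : {rmorphism B -> A},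
        (forall x, f (pi x) = sigma x) /\ is_left_loc (@S0 B) f]
  /\
  (* (2) *)
  ((forall u : A, S0 u <-> u \is a GRing.unit) /\
   (forall x, S0 (sigma x) <-> S0 (pi x)))
  /\
  (* (3) *)
  (forall x, S x <-> sigma x \is a GRing.unit)
  /\
  (* (4) *)
  (forall u : A, u \is a GRing.unit <->
     gen_group (fun v => exists s, S s /\ (v = sigma s \/ v = (sigma s)^-1)) u)
  /\
  (* (5) *)
  (forall u : A, u \is a GRing.unit <->
     exists s t, [/\ S s, S t & u = (sigma s)^-1 * sigma t])
  /\
  (* (6) *)
  [/\ is_left_loc (@S0 A) (@idfun A : {rmorphism A -> A}),
      (forall I : A -> Prop, Ass_l I <-> (forall x, I x <-> x = 0)) &
      (forall T : A -> Prop, Den_l (@zero_ideal A) T ->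
         forall u, T u -> u \is a GRing.unit)].
Proof.
have den_units := left_den_loc_unit HS Hloc.
have S0A := S0_unitP den_units.
have S0B := maxDen_S0_quotient HS Hpi_surj Hpi_ker.
split.
  split; [exact: maxDen_S_ass | exact: S0B | exact: S0_quotient_image | ].
  exists (surj_factor Hpi_surj (ker_pi_sigma Hpi_ker Hloc)).
  by split; [exact: surj_factorE | exact: quotient_left_loc].
have unitP := maxDen_unitP HS Hloc.
split; first by split=> // x; split=> [/S0A /unitP /S0B | /S0B /unitP /S0A].
split; first exact: unitP.
split; first exact: unit_gen_groupP.
split; first exact: unit_fracP.
split; [exact: left_loc_idfun | exact: Ass_l_zero | ].
by move=> T [LT _]; apply: den_units.
Qed.
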